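(* The hereditary class property $\Delta_\omega$ = ''bounded maximum degree after deletion of a bounded number of vertices'' — the set of hereditary classes $\mathscr C$ for which there are integers $k,d$ such that every $G\in\mathscr C$ has a set $S$ of at most $k$ vertices with $G-S$ of maximum degree at most $d$ — is a decomposition horizon.
   Context: Graphs are finite and simple. A hereditary class is a class closed under isomorphism and induced subgraphs; a hereditary class property is a set $\Pi$ of hereditary classes closed under passing to hereditary subclasses. For non-decreasing $f$ and positive integer $p$, $\mathscr C$ has an $f$-bounded $\Pi$-decomposition with parameter $p$ if there is $\mathscr D_p\in\Pi$ such that every $G\in\mathscr C$ has a partition $V_1,\dots,V_N$ of $V(G)$ with $N\le f(|G|)$ and $G[V_{i_1}\cup\dots\cup V_{i_p}]\in\mathscr D_p$ for all $i_1,\dots,i_p\in[N]$. $\Pi^\ast$ is the set of hereditary classes that, for every positive integer $p$, have such a decomposition for some non-decreasing $f$ with $f(n)=n^{o(1)}$. $\Pi$ is a decomposition horizon if $\Pi^\ast=\Pi$. *)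

From mathcomp Require Import all_boot.
Set Implicit Arguments. Unset Strict Implicit. Unset Printing Implicit Defensive.

Record graph := Graph {
  gv : nat;
  gadj : rel 'I_gv;
  gsym : symmetric gadj;
  girr : irreflexive gadj }.
Arguments gadj : clear implicits.

Definition order (G : graph) : nat := gv G.

Definition induced_sub (H G : graph) : Prop :=
  exists f : 'I_(gv H) -> 'I_(gv G),
    injective f /\ forall x y, gadj H x y = gadj G (f x) (f y).

Definition gclass := graph -> Prop.

Definition hereditary (C : gclass) : Prop :=
  forall G H, C G -> induced_sub H G -> C H.

Section Induced.
Variables (G : graph) (S : {set 'I_(gv G)}).
Definition induced_adj : rel 'I_#|S| :=
  fun x y => gadj G (enum_val x) (enum_val y).
Lemma induced_sym : symmetric induced_adj.
Proof. by move=> x y; rewrite /induced_adj gsym. Qed.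
Lemma induced_irr : irreflexive induced_adj.
Proof. by move=> x; rewrite /induced_adj girr. Qed.
Definition induced : graph := Graph induced_sym induced_irr.
End Induced.

Definition delete (G : graph) (S : {set 'I_(gv G)}) : graph := induced (~: S).

Definition degree (G : graph) (v : 'I_(gv G)) : nat := #|[set u | gadj G v u]|.
Arguments degree : clear implicits.
Definition maxdeg (G : graph) : nat := \max_(v : 'I_(gv G)) degree G v.

Definition class_property := gclass -> Prop.

Definition Delta_omega : class_property := fun C =>
  hereditary C /\
  exists k d : nat, forall G : graph, C G ->
    exists S : {set 'I_(gv G)}, #|S| <= k /\ maxdeg (delete S) <= d.

(* f(n) = n^{o(1)}: for every eps > 0, eventually f(n) <= n^eps; equivalently
   (taking eps = 1/k) for every positive integer k, eventually f(n)^k <= n. *)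
Definition subpoly (f : nat -> nat) : Prop :=
  forall k : nat, 0 < k -> exists n0 : nat, forall n : nat, n0 <= n -> f n ^ k <= n.

Definition has_decomposition (Pi : class_property) (C : gclass)
    (f : nat -> nat) (p : nat) : Prop :=
  exists D : gclass, Pi D /\
    forall G : graph, C G ->
      exists (N : nat) (V : 'I_N -> {set 'I_(gv G)}),
        N <= f (order G) /\
        (forall x : 'I_(gv G), exists! i : 'I_N, x \in V i) /\
        forall i : 'I_p -> 'I_N, D (induced (\bigcup_(j < p) V (i j))).

Definition star (Pi : class_property) : class_property := fun C =>
  hereditary C /\
  forall p : nat, 0 < p ->
    exists f : nat -> nat, {homo f : m n / m <= n} /\ subpoly f /\
      has_decomposition Pi C f p.

Definition decomposition_horizon (Pi : class_property) : Prop :=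
  forall C : gclass, star Pi C <-> Pi C.

From mathcomp Require Import all_boot zify.
Set Implicit Arguments. Unset Strict Implicit. Unset Printing Implicit Defensive.

(* Delta_omega lies in its star through the one-part decomposition.
   Conversely, take decompositions with parameter 2 into N <= f(|G|) parts
   whose pairwise unions lie in a class with constants (k, d).  Deleting the
   k exceptional vertices of G[V_a :|: V_b] for every pair (a, b) leaves each
   vertex with at most d neighbours in every part, so deleting N^2 k
   vertices of G leaves maximum degree at most N d.  If some G in the class
   needed more than t deletions to reach maximum degree 2t, a greedy search
   would find t+1 vertices W, each with more than 2t neighbours inside a set
   U of only O(t^2) vertices.  Since f is subpolynomial, G[U] has
   N = O(t^(1/4)) parts, hence some S of at most N^2 k <= t vertices leaves
   degrees <= N d <= t in G[U] - S; a vertex of W outside S then has more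
   than 2t - t neighbours in U minus S, a contradiction. *)

Definition deletable (k d : nat) (G : graph) : Prop :=
  exists S : {set 'I_(gv G)}, #|S| <= k /\ maxdeg (delete S) <= d.

Definition deg_in (G : graph) (B : {set 'I_(gv G)}) (v : 'I_(gv G)) : nat :=
  #|[set u in B | gadj G v u]|.
Arguments deg_in : clear implicits.

(* Inference cannot recover the set [A] from the type ['I_#|A|] alone. *)
Local Notation ev A := (@enum_val _ (pred_of_set A)).

Lemma leq_card_bigcup (T I : finType) (P : pred I) (F : I -> {set T}) :
  #|\bigcup_(i | P i) F i| <= \sum_(i | P i) #|F i|.
Proof.
elim/big_rec2: _ => [|i A n _ le_An]; first by rewrite cards0.
by apply: leq_trans (leq_card_setU _ _) _; rewrite leq_add2l.
Qed.

Lemma subset_of_card (T : finType) (A : {set T}) n :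
  n <= #|A| -> exists2 B : {set T}, B \subset A & #|B| = n.
Proof.
case/card_geqP=> s [uniq_s size_s sub_sA]; exists [set x in s].
  by apply/subsetP => x; rewrite inE => /sub_sA.
by rewrite cardsE (card_uniqP uniq_s).
Qed.

Lemma deg_inS (G : graph) (A B : {set 'I_(gv G)}) v :
  A \subset B -> deg_in G A v <= deg_in G B v.
Proof.
move=> sAB; apply/subset_leq_card/subsetP => u; rewrite !inE.
by case/andP=> /(subsetP sAB) -> ->.
Qed.

Lemma deg_in_setD (G : graph) (A S : {set 'I_(gv G)}) v :
  deg_in G A v <= deg_in G (A :\: S) v + #|S|.
Proof.
apply: leq_trans (leq_card_setU _ S); apply/subset_leq_card/subsetP => u.
by rewrite !inE; case: (u \in S) => //= /andP[-> ->].
Qed.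

Lemma deg_in_embed (H G : graph) (f : 'I_(gv H) -> 'I_(gv G))
    (B : {set 'I_(gv H)}) x :
  injective f -> (forall x y, gadj H x y = gadj G (f x) (f y)) ->
  deg_in H B x = deg_in G (f @: B) (f x).
Proof.
move=> f_inj f_adj; rewrite /deg_in -(card_imset _ f_inj).
apply: eq_card => u; apply/imsetP/idP => [[y]|]; rewrite !inE.
  by case/andP=> yB xy ->; rewrite (mem_imset _ _ f_inj) yB -f_adj.
case/andP=> /imsetP[y yB ->]; rewrite -f_adj => xy.
by exists y; rewrite ?inE ?yB.
Qed.

Lemma imset_enum_val_setC (T : finType) (A : {set T}) (B : {set 'I_#|A|}) :
  ev A @: (~: B) = A :\: ev A @: B.
Proof.
apply/setP => u; rewrite !inE.
case: (boolP (u \in A)) => [uA | /negbTE uA]; last first.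
  by rewrite andbF; apply/imsetP => -[x _ ux]; rewrite ux enum_valP in uA.
by rewrite -(enum_rankK_in uA uA) !(mem_imset _ _ enum_val_inj) inE andbT.
Qed.

Lemma imset_enum_val_setT (T : finType) (A : {set T}) :
  ev A @: [set: 'I_#|A|] = A.
Proof. by rewrite -setC0 imset_enum_val_setC imset0 setD0. Qed.

Lemma deg_in_induced (G : graph) (A : {set 'I_(gv G)}) (B : {set 'I_#|A|}) x :
  deg_in (induced A) B x = deg_in G (ev A @: B) (ev A x).
Proof. by apply: deg_in_embed; first exact: enum_val_inj. Qed.

Lemma induced_sub_induced (G : graph) (A : {set 'I_(gv G)}) :
  induced_sub (induced A) G.
Proof. by exists (ev A); split; first exact: enum_val_inj. Qed.

Lemma maxdeg_induced_leP (G : graph) (A : {set 'I_(gv G)}) D :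
  maxdeg (induced A) <= D <-> {in A, forall v, deg_in G A v <= D}.
Proof.
have deg_ev x : degree (induced A) x = deg_in G A (ev A x).
  have := deg_in_induced setT x; rewrite imset_enum_val_setT => <-.
  by apply: eq_card => y; rewrite !inE.
split=> [le_D v vA | le_D].
  rewrite -(enum_rankK_in vA vA) -deg_ev; apply: leq_trans le_D.
  exact: (@leq_bigmax _ (degree (induced A))).
by apply/bigmax_leqP => x _; rewrite deg_ev le_D ?enum_valP.
Qed.

Lemma deletable_induced (G : graph) (A : {set 'I_(gv G)}) k d :
  deletable k d (induced A) ->
  exists S : {set 'I_(gv G)},
    #|S| <= k /\ {in A :\: S, forall v, deg_in G (A :\: S) v <= d}.
Proof.
move=> [S' [card_S' /maxdeg_induced_leP le_d]].
exists (ev A @: S'); split; first exact: leq_trans (leq_imset_card _ _) card_S'.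
rewrite -imset_enum_val_setC => _ /imsetP[x xS' ->].
by rewrite -deg_in_induced le_d.
Qed.

Lemma deletable_of_pairs (G : graph) k d N (V : 'I_N -> {set 'I_(gv G)}) :
  (forall x, exists i, x \in V i) ->
  (forall a b, deletable k d (induced (V a :|: V b))) ->
  deletable (N * N * k) (N * d) G.
Proof.
move=> V_cover V_del.
have pair_sparse (ab : 'I_N * 'I_N) : exists S : {set 'I_(gv G)},
    #|S| <= k /\ {in V ab.1 :\: S, forall v, deg_in G (V ab.2 :\: S) v <= d}.
  have [S [card_S le_d]] := deletable_induced (V_del ab.1 ab.2).
  exists S; split=> // v vS; have sub_S := setSD S (subsetUr (V ab.1) (V ab.2)).
  apply: leq_trans (deg_inS _ sub_S) (le_d v _).
  by move: v vS; apply/subsetP/setSD/subsetUl.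
have [F F_sparse] := fin_all_exists pair_sparse.
exists (\bigcup_ab F ab); split.
  apply: leq_trans (leq_card_bigcup _ _) _.
  have -> : N * N * k = \sum_(ab : 'I_N * 'I_N) k.
    by rewrite sum_nat_const card_prod card_ord.
  by apply: leq_sum => ab _; case: (F_sparse ab).
apply/maxdeg_induced_leP => v; rewrite inE => vS.
have [a va] := V_cover v.
have vF b : v \notin F (a, b).
  by apply: contra vS => vF; apply/bigcupP; exists (a, b).
apply: leq_trans
  (_ : #|\bigcup_b [set u in V b :\: F (a, b) | gadj G v u]| <= _).
  apply/subset_leq_card/subsetP => u; rewrite !inE => /andP[uS vu].
  have [b ub] := V_cover u; apply/bigcupP; exists b; rewrite // !inE ub vu !andbT.
  by apply: contra uS => uF; apply/bigcupP; exists (a, b).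
apply: leq_trans (leq_card_bigcup _ _) _.
have -> : N * d = \sum_(b < N) d by rewrite sum_nat_const card_ord.
apply: leq_sum => b _.
by case: (F_sparse (a, b)) => _; apply; rewrite inE vF.
Qed.

Lemma deletable_or_heavy (G : graph) (s D : nat) :
  deletable s D G \/
  exists W U : {set 'I_(gv G)}, [/\ #|W| = s.+1, W \subset U,
    #|U| <= s.+1 * D.+2 & {in W, forall w, D < deg_in G U w}].
Proof.
suff grow j : j <= s.+1 -> deletable s D G \/
    exists W U : {set 'I_(gv G)}, [/\ #|W| = j, W \subset U,
      #|U| <= j * D.+2 & {in W, forall w, D < deg_in G U w}].
  exact: grow.
elim: j => [_ | j IHj lt_js].
  by right; exists set0, set0; rewrite cards0 sub0set; split=> // w; rewrite inE.
have [del | [W [U [card_W sWU card_U W_heavy]]]] := IHj (ltnW lt_js).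
  by left.
have [W_sparse | /forall_inPn[v]] :=
  boolP [forall v in ~: W, deg_in G (~: W) v <= D].
  left; exists W; split; first by rewrite card_W.
  by apply/maxdeg_induced_leP => v /(forall_inP W_sparse).
rewrite inE -ltnNge => vW deg_v.
have [X sub_X card_X] := subset_of_card deg_v.
right; exists (v |: W), (v |: (U :|: X)); split.
- by rewrite cardsU1 vW card_W.
- by rewrite setUS // subsetU ?sWU.
- apply: leq_trans (_ : 1 + (#|U| + #|X|) <= _).
    by rewrite cardsU1 leq_add ?leq_b1 ?leq_card_setU.
  by rewrite card_X; lia.
move=> w /setU1P[-> | wW].
  rewrite -card_X; apply/subset_leq_card/subsetP => u uX.
  by move: (subsetP sub_X u uX); rewrite !inE uX !orbT => /andP[_ ->].
apply: leq_trans (W_heavy w wW) (deg_inS _ _).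
exact: subset_trans (subsetUl U X) (subsetU1 v _).
Qed.

Lemma heavy_not_sparse (G : graph) (W U S : {set 'I_(gv G)}) a b :
  W \subset U -> #|S| <= a < #|W| ->
  {in W, forall w, a + b < deg_in G U w} ->
  ~ {in U :\: S, forall v, deg_in G (U :\: S) v <= b}.
Proof.
move=> sWU /andP[card_S lt_SW] W_heavy U_sparse.
have /subsetPn[w wW wS] : ~~ (W \subset S).
  apply: contraL lt_SW => /subset_leq_card le_WS.
  by rewrite -leqNgt (leq_trans le_WS).
have := leq_trans (W_heavy w wW) (deg_in_setD _ S w).
by rewrite ltnNge addnC leq_add // U_sparse // inE wS (subsetP sWU).
Qed.

Lemma sqr_mul_leq (N c t : nat) :
  N ^ 8 <= (2 * t.+1) ^ 2 -> 2 * c ^ 2 <= t -> N ^ 2 * c <= t.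
Proof.
move=> le_N8 le_c; rewrite leqNgt; apply/negP => lt_t.
have le_N4 : N ^ 4 <= 2 * t.+1 by rewrite -(@leq_exp2r _ _ 2) // -expnM.
have : t.+1 ^ 2 <= (N ^ 2 * c) ^ 2 by rewrite leq_exp2r.
rewrite expnMn -expnM; nia.
Qed.

Lemma Delta_omega_star (C : gclass) : Delta_omega C -> star Delta_omega C.
Proof.
move=> Delta_C; have C_her := Delta_C.1; split=> // p _.
exists (fun=> 1); split=> //; split.
  by move=> e _; exists 1 => n; rewrite exp1n.
exists C; split=> // G CG; exists 1, (fun=> setT); split=> //; split.
  by move=> x; exists ord0; split=> [|i _]; rewrite ?inE ?ord1.
by move=> i; apply: C_her CG (induced_sub_induced _).
Qed.

Lemma star_Delta_omega (C : gclass) : star Delta_omega C -> Delta_omega C.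
Proof.
move=> [C_her /(_ 2 isT) [f [f_mono [f_subpoly [D [[_ [k [d D_del]]] D_dec]]]]]].
split=> //; have [n0 f_small] := f_subpoly 8 isT.
(* t >= n0 puts |U| where f^8 is below the identity, and t >= 2 (k + d)^2
   then forces N^2 (k + d) <= t. *)
pose t := 2 * (k + d) ^ 2 + n0.
exists t, (2 * t) => G CG.
have [//|[W [U [card_W sWU card_U W_heavy]]]] := deletable_or_heavy G t (2 * t).
have [N [V [le_N [V_part V_pairs]]]] :=
  D_dec _ (C_her _ _ CG (induced_sub_induced U)).
have U_del : deletable (N * N * k) (N * d) (induced U).
  apply: (deletable_of_pairs (V := V)) => [x | a b].
    by have [i [xi _]] := V_part x; exists i.
  pose i (j : 'I_2) := if j == ord0 then a else b.
  have -> : V a :|: V b = \bigcup_(j < 2) V (i j).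
    by rewrite big_ord_recl big_ord1.
  exact: D_del.
have le_N8 : N ^ 8 <= (2 * t.+1) ^ 2.
  have le_U : #|U| <= (2 * t.+1) ^ 2.
    by apply: leq_trans card_U _; rewrite -mulnn; nia.
  have le_n0 : n0 <= (2 * t.+1) ^ 2 by rewrite -mulnn /t; nia.
  apply: leq_trans (f_small _ le_n0); rewrite leq_exp2r //.
  exact: leq_trans le_N (f_mono _ _ le_U).
have le_t : N ^ 2 * (k + d) <= t by apply: sqr_mul_leq => //; rewrite leq_addr.
have [S [card_S S_sparse]] := deletable_induced U_del.
case: (heavy_not_sparse (a := t) sWU _ _ S_sparse).
  by rewrite card_W ltnSn (leq_trans card_S) //; nia.
move=> w /W_heavy; apply: leq_trans.
by rewrite ltnS mul2n -addnn leq_add2l; nia.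
Qed.

Theorem mainTheorem15 : decomposition_horizon Delta_omega.
Proof. by move=> C; split; [apply: star_Delta_omega | apply: Delta_omega_star]. Qed.
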